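(* Let $\mathbb{F}_q$ be a finite field, $\mathcal{C}\subseteq\mathbb{F}_q^n$ a linear $[n,k]$ code with dual code $\mathcal{C}^\perp$, and $\mathbb{P}$ a poset on $[n]=\{1,\dots,n\}$ with dual poset $\widetilde{\mathbb{P}}$. For $1\le r\le k$, $$d_r^{\mathbb{P}}(\mathcal{C})=\min\{|\langle J\rangle_{\mathbb{P}}| : J\subseteq[n],\ |J|-\rho^\perp(J)\ge r\}=\min\{|\langle J\rangle_{\mathbb{P}}| : J\subseteq[n],\ |J|-\rho^\perp(J)= r\}.$$ For $1\le s\le n-k$, $$d_s^{\widetilde{\mathbb{P}}}(\mathcal{C}^\perp)=\min\{|\langle J\rangle_{\widetilde{\mathbb{P}}}| : J\subseteq[n],\ |J|-\rho(J)\ge s\}=\min\{|\langle J\rangle_{\widetilde{\mathbb{P}}}| : J\subseteq[n],\ |J|-\rho(J)= s\}.$$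
   Context: The dual poset $\widetilde{\mathbb{P}}$ has $i\le_{\widetilde{\mathbb{P}}}j$ iff $j\le_{\mathbb{P}}i$. For $J\subseteq[n]$, $\langle J\rangle_{\mathbb{P}}=\{i:i\le_{\mathbb{P}}j\text{ for some }j\in J\}$ (the smallest ideal of $\mathbb{P}$ containing $J$), and similarly for $\widetilde{\mathbb{P}}$. For $u\in\mathbb{F}_q^n$, $\mathrm{supp}(u)=\{i:u_i\ne0\}$; for $D\subseteq\mathbb{F}_q^n$, $\mathrm{supp}(D)=\bigcup_{u\in D}\mathrm{supp}(u)$ and $w_{\mathbb{P}}(D)=|\langle\mathrm{supp}(D)\rangle_{\mathbb{P}}|$. The $r$-th generalized minimum $\mathbb{P}$-weight is $d_r^{\mathbb{P}}(\mathcal{C})=\min\{w_{\mathbb{P}}(D): D \text{ an } r\text{-dimensional subspace of }\mathcal{C}\}$, and $d_s^{\widetilde{\mathbb{P}}}(\mathcal{C}^\perp)=\min\{w_{\widetilde{\mathbb{P}}}(D): D \text{ an } s\text{-dimensional subspace of }\mathcal{C}^\perp\}$. For $A\subseteq[n]$, $\mathcal{C}|A=\{(u_i)_{i\in A}:u\in\mathcal{C}\}$; $\rho(A)=\dim(\mathcal{C}|A)$ and $\rho^\perp(A)=\dim(\mathcal{C}^\perp|A)$ are the rank and corank functions of the matroid of $\mathcal{C}$. *)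

From mathcomp Require Import all_boot all_order all_algebra.
Set Implicit Arguments. Unset Strict Implicit. Unset Printing Implicit Defensive.
Import GRing.Theory.
Local Open Scope ring_scope.

(* A partial order on [n] = 'I_n (0-indexed coordinates). *)
Definition is_poset (n : nat) (le : rel 'I_n) : Prop :=
  [/\ reflexive le, antisymmetric le & transitive le].

Definition dual_rel (n : nat) (le : rel 'I_n) : rel 'I_n := fun i j => le j i.

Definition ideal (n : nat) (le : rel 'I_n) (J : {set 'I_n}) : {set 'I_n} :=
  [set i | [exists j in J, le i j]].

(* A linear code is the row space of a matrix (%MS).  supp(D) of a subspace D. *)
Definition supp (F : finFieldType) (n p : nat) (D : 'M[F]_(p, n)) : {set 'I_n} :=
  [set i | [exists u : 'rV[F]_n, (u <= D)%MS && (u 0 i != 0)]].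

Definition wP (F : finFieldType) (n p : nat) (le : rel 'I_n) (D : 'M[F]_(p, n)) : nat :=
  #|ideal le (supp D)|.

(* r-th generalized minimum P-weight of the code with row space C:
   minimum of w_P(D) over r-dimensional subspaces D of C (every such subspace
   is the row space of some n x n matrix).  The default n.+1 is only reached
   when there is no such subspace. *)
Definition dP (F : finFieldType) (n p : nat) (le : rel 'I_n) (C : 'M[F]_(p, n)) (r : nat) : nat :=
  \big[minn/n.+1]_(D : 'M[F]_n | (D <= C)%MS && (\rank D == r)) wP le D.

Definition restr (F : finFieldType) (n p : nat) (C : 'M[F]_(p, n)) (A : {set 'I_n})
  : 'M[F]_(p, #|A|) := colsub (@enum_val _ (mem A)) C.

Definition rho (F : finFieldType) (n p : nat) (C : 'M[F]_(p, n)) (A : {set 'I_n}) : nat :=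
  \rank (restr C A).

Definition dual_code (F : finFieldType) (n m : nat) (G : 'M[F]_(m, n)) : 'M[F]_n :=
  kermx G^T.

(* For J ⊆ [n], the subcode of C supported on J is the kernel of the restriction
   to J of a parity-check matrix, so its dimension is |J| - ρ⊥(J).  Hence an
   r-dimensional subcode D yields J = supp D with |J| - ρ⊥(J) ≥ r and
   |<J>| = w(D), while any such J contains an r-dimensional subcode supported
   in J, whose weight is at most |<J>| since ideals are monotone.  Deleting one
   coordinate lowers |J| - ρ⊥(J) by at most one, so the minimum over
   |J| - ρ⊥(J) ≥ r is attained where it equals r.  The statement for the dual
   code is the same argument with the roles of C and C⊥ exchanged, as
   C⊥⊥ = C. *)
From mathcomp Require Import all_boot all_order all_algebra.
From mathcomp Require Import zify.
Set Implicit Arguments. Unset Strict Implicit. Unset Printing Implicit Defensive.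
Import Order.TTheory GRing.Theory.

Lemma bigmin_leq_bigmin (I1 I2 : finType) (P1 : pred I1) (P2 : pred I2)
    (f1 : I1 -> nat) (f2 : I2 -> nat) x :
  (forall i, P1 i -> exists2 j, P2 j & (f2 j <= f1 i)%N) ->
  (\big[minn/x]_(j | P2 j) f2 j <= \big[minn/x]_(i | P1 i) f1 i)%N.
Proof.
move=> H; apply: (@le_bigmin _ nat) => [|i /H [j P2j le_f]].
  exact: (@bigmin_le_id _ nat).
exact: (@bigmin_inf _ nat _ _ j).
Qed.

Lemma ideal_subset n (le : rel 'I_n) (J1 J2 : {set 'I_n}) :
  J1 \subset J2 -> ideal le J1 \subset ideal le J2.
Proof.
move=> sJ; apply/subsetP => i; rewrite !inE => /existsP [j /andP [jJ lij]].
by apply/existsP; exists j; rewrite (subsetP sJ).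
Qed.

Section CoordinateSubspaces.
Variables (F : finFieldType) (n : nat).
Local Open Scope ring_scope.

Definition coord_mx (J : {set 'I_n}) : 'M[F]_(#|J|, n) :=
  rowsub (@enum_val _ (mem J)) 1%:M.

Lemma coord_mxE (J : {set 'I_n}) j l : coord_mx J j l = (@enum_val _ (mem J) j == l)%:R.
Proof. by rewrite !mxE. Qed.

Lemma restr_coord p (C : 'M[F]_(p, n)) (J : {set 'I_n}) : restr C J = C *m (coord_mx J)^T.
Proof. by rewrite /restr /coord_mx trmx_mxsub trmx1 mulmx_colsub mulmx1. Qed.

Lemma row_free_coord_mx (J : {set 'I_n}) : row_free (coord_mx J).
Proof.
have coordK : coord_mx J *m (coord_mx J)^T = 1%:M.
  apply/matrixP => i j; rewrite -restr_coord /restr !mxE.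
  by rewrite (inj_eq enum_val_inj).
rewrite /row_free eqn_leq rank_leq_row /=.
by have := mxrankM_maxl (coord_mx J) (coord_mx J)^T; rewrite coordK mxrank1.
Qed.

Lemma mulmx_coord_mx_notin (J : {set 'I_n}) k (Y : 'M[F]_(k, #|J|)) i l :
  l \notin J -> (Y *m coord_mx J) i l = 0.
Proof.
move=> lJ; rewrite mxE big1 // => j _; rewrite coord_mxE.
by case: eqP => [e|]; [by move: lJ; rewrite -e (enum_valP j) | rewrite mulr0].
Qed.

Lemma restr_coord_mxK (J : {set 'I_n}) k (X : 'M[F]_(k, n)) :
  (forall i l, l \notin J -> X i l = 0) -> X *m (coord_mx J)^T *m coord_mx J = X.
Proof.
move=> X0; rewrite -restr_coord; apply/matrixP => i l.
have [lJ | lJ] := boolP (l \in J); last by rewrite mulmx_coord_mx_notin // X0.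
have lJ' : l \in mem J by [].
rewrite mxE (bigD1 (enum_rank_in lJ' l)) //= big1 => [|j nj].
  by rewrite coord_mxE !mxE enum_rankK_in // eqxx mulr1 addr0.
rewrite coord_mxE; case: eqP => [e|]; last by rewrite mulr0.
by case/eqP: nj; apply: enum_val_inj; rewrite enum_rankK_in.
Qed.

Lemma supp_subset_coord k (D : 'M[F]_(k, n)) (J : {set 'I_n}) :
  (supp D \subset J) = (D <= coord_mx J)%MS.
Proof.
apply/idP/idP => [suppJ | DJ].
  apply/row_subP => i; rewrite -(restr_coord_mxK (X := row i D) (J := J)).
    by rewrite submxMl.
  move=> i0 l lJ; rewrite mxE; apply/eqP; apply: contraNT lJ => Dil.
  apply: (subsetP suppJ); rewrite inE; apply/existsP; exists (row i D).
  by rewrite row_sub mxE Dil.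
apply/subsetP => l; rewrite inE => /existsP [u /andP [uD]].
apply: contraR => lJ; have uJ := submx_trans uD DJ.
by rewrite -(mulmxKpV uJ) mulmx_coord_mx_notin.
Qed.

Lemma rho_subset q (B : 'M[F]_(q, n)) (J1 J2 : {set 'I_n}) :
  J1 \subset J2 -> (rho B J1 <= rho B J2)%N.
Proof.
move=> sJ; rewrite /rho !restr_coord.
have -> : (coord_mx J1)^T = (coord_mx J2)^T *m (coord_mx J2 *m (coord_mx J1)^T).
  apply: trmx_inj; rewrite !trmx_mul !trmxK restr_coord_mxK // => i l lJ.
  rewrite coord_mxE; case: eqP => // e.
  by move: lJ; rewrite -e (subsetP sJ) // (enum_valP i).
by rewrite mulmxA mxrankM_maxl.
Qed.

Lemma exists_subset_nullity_eq q (B : 'M[F]_(q, n)) r (J : {set 'I_n}) :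
  (r <= #|J| - rho B J)%N ->
  exists2 J' : {set 'I_n}, J' \subset J & (#|J'| - rho B J' == r)%N.
Proof.
have [N] := ubnP #|J|; elim: N J => // N IH J cardJ rJ.
have [eq_r | ne_r] := eqVneq (#|J| - rho B J)%N r; first by exists J; rewrite ?subxx ?eq_r.
have {ne_r rJ} lt_r : (r < #|J| - rho B J)%N by rewrite ltn_neqAle eq_sym ne_r.
have [J0 | [x xJ]] := set_0Vmem J; first by move: lt_r; rewrite J0 cards0.
have cardJx := cardsD1 x J; rewrite xJ in cardJx.
have rhoJx := rho_subset B (subsetDl J [set x]).
have [J' sJ' eq_r] := IH (J :\ x) ltac:(lia) ltac:(lia).
by exists J' => //; apply: subset_trans sJ' (subsetDl J [set x]).
Qed.

Lemma exists_submx_rank p (M : 'M[F]_(p, n)) r :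
  (r <= \rank M)%N -> exists2 D : 'M[F]_n, (D <= M)%MS & \rank D == r.
Proof.
move=> rM; exists (pid_mx r *m row_base M).
  by rewrite (submx_trans (submxMl _ _)) // eq_row_base.
rewrite mxrankMfree ?row_base_free // rank_pid_mx //.
exact: leq_trans rM (rank_leq_col M).
Qed.

Section Subcodes.
Variables (p q : nat) (A : 'M[F]_(p, n)) (B : 'M[F]_(q, n)).
Hypothesis submx_annihilated : forall k (X : 'M[F]_(k, n)), (X <= A)%MS = (X *m B^T == 0).

Lemma rank_cap_coord_mx (J : {set 'I_n}) : \rank (A :&: coord_mx J)%MS = (#|J| - rho B J)%N.
Proof.
set K := kermx (restr B J)^T.
have -> : (#|J| - rho B J)%N = \rank (K *m coord_mx J).
  by rewrite mxrankMfree ?row_free_coord_mx // mxrank_ker mxrank_tr.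
have restr_tr : coord_mx J *m B^T = (restr B J)^T by rewrite restr_coord trmx_mul trmxK.
apply/eqP; rewrite eqn_leq !mxrankS //.
  rewrite sub_capmx submxMl andbT submx_annihilated -mulmxA restr_tr.
  by rewrite mulmx_ker.
have AJ := capmxSr A (coord_mx J).
rewrite -(mulmxKpV AJ) submxMr // sub_kermx -restr_tr mulmxA (mulmxKpV AJ).
by rewrite -submx_annihilated capmxSl.
Qed.

Variable (le : rel 'I_n).

Lemma dP_bigmin_nullity_geq r :
  dP le A r = \big[minn/n.+1]_(J : {set 'I_n} | (r <= #|J| - rho B J)%N) #|ideal le J|.
Proof.
apply/eqP; rewrite eqn_leq; apply/andP; split; apply: bigmin_leq_bigmin.
  move=> J; rewrite -rank_cap_coord_mx => /exists_submx_rank [D DAJ rD].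
  exists D; first by rewrite rD (submx_trans DAJ) ?capmxSl.
  by rewrite subset_leq_card // ideal_subset // supp_subset_coord
             (submx_trans DAJ) ?capmxSr.
move=> D /andP [DA /eqP <-]; exists (supp D) => //.
by rewrite -rank_cap_coord_mx mxrankS // sub_capmx DA -supp_subset_coord subxx.
Qed.

Lemma dP_bigmin_nullity_eq r :
  dP le A r = \big[minn/n.+1]_(J : {set 'I_n} | (#|J| - rho B J == r)%N) #|ideal le J|.
Proof.
rewrite dP_bigmin_nullity_geq; apply/eqP; rewrite eqn_leq.
apply/andP; split; apply: bigmin_leq_bigmin => J.
  by move/eqP=> eq_r; exists J; rewrite ?eq_r.
case/exists_subset_nullity_eq => J' sJ' eq_r; exists J' => //.
by rewrite subset_leq_card // ideal_subset.
Qed.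

End Subcodes.

Lemma submx_kermx_tr_kermx m (G : 'M[F]_(m, n)) k (X : 'M[F]_(k, n)) :
  (X <= G)%MS = (X *m (kermx G^T)^T == 0).
Proof.
rewrite -sub_kermx.
have G_ker : (G <= kermx (kermx G^T)^T)%MS.
  by rewrite sub_kermx -[G in G *m _]trmxK -trmx_mul mulmx_ker trmx0.
have ker_G : (kermx (kermx G^T)^T <= G)%MS.
  rewrite -(mxrank_leqif_sup G_ker).2.
  by rewrite !(mxrank_ker, mxrank_tr) subKn ?rank_leq_col.
by apply/idP/idP => /submx_trans; [apply | apply].
Qed.

End CoordinateSubspaces.

Unset Implicit Arguments.
Theorem theorem2 (F : finFieldType) (n m k : nat) (G : 'M[F]_(m, n))
  (le : rel 'I_n) :
  is_poset le -> \rank G = k ->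
  (forall r : nat, (1 <= r <= k)%N ->
     dP le G r = \big[minn/n.+1]_(J : {set 'I_n} | (r <= #|J| - rho (dual_code G) J)%N)
                    #|ideal le J|
  /\ dP le G r = \big[minn/n.+1]_(J : {set 'I_n} | (#|J| - rho (dual_code G) J == r)%N)
                    #|ideal le J|)
  /\
  (forall s : nat, (1 <= s <= n - k)%N ->
     dP (dual_rel le) (dual_code G) s
       = \big[minn/n.+1]_(J : {set 'I_n} | (s <= #|J| - rho G J)%N) #|ideal (dual_rel le) J|
  /\ dP (dual_rel le) (dual_code G) s
       = \big[minn/n.+1]_(J : {set 'I_n} | (#|J| - rho G J == s)%N) #|ideal (dual_rel le) J|).
Proof.
move=> _ _.
have code_annihilated k' (X : 'M[F]_(k', n)) : (X <= G)%MS = (X *m (dual_code G)^T == 0)%R.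
  exact: submx_kermx_tr_kermx.
have dual_annihilated k' (X : 'M[F]_(k', n)) : (X <= dual_code G)%MS = (X *m G^T == 0)%R.
  exact: sub_kermx.
split=> [r _ | s _]; split.
- exact: (dP_bigmin_nullity_geq code_annihilated).
- exact: (dP_bigmin_nullity_eq code_annihilated).
- exact: (dP_bigmin_nullity_geq dual_annihilated).
- exact: (dP_bigmin_nullity_eq dual_annihilated).
Qed.
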